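(* Let $A=\{2,3,5,7,11,\dots\}$ be the set of all prime numbers. For every positive integer $n$, $$\sum_{k=1}^{n}N^p_A(k)\big(q^e_A(n-k)-q^o_A(n-k)\big)=\Omega(n),$$ where $\Omega(n)$ denotes the number of distinct prime divisors of $n$.
   Context: For a set $A$ of positive integers, $N^p_A(n)$ is the total number of parts, summed over all partitions of $n$ with parts in $A$. $q^e_A(m)$ (resp. $q^o_A(m)$) is the number of partitions of $m$ into pairwise distinct parts from $A$ with an even (resp. odd) number of parts; $q^e_A(0)=1$, $q^o_A(0)=0$. *)

From mathcomp Require Import all_boot all_order all_algebra.
Set Implicit Arguments. Unset Strict Implicit. Unset Printing Implicit Defensive.

(* A partition of n with parts in A is encoded by its multiplicity function
   m : 'I_n.+1 -> 'I_n.+1 (m i = number of parts equal to i); parts can only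
   be in 1..n and multiplicities are <= n, so this is a bijective encoding
   (A is a set of positive integers, so A 0 is false and m 0 = 0). *)
Definition is_partA (A : pred nat) (n : nat) (m : {ffun 'I_n.+1 -> 'I_n.+1}) : bool :=
  [forall i, (m i != 0 :> nat) ==> A i] && (\sum_(i < n.+1) i * m i == n).

Definition NpA (A : pred nat) (n : nat) : nat :=
  \sum_(m : {ffun 'I_n.+1 -> 'I_n.+1} | is_partA A m) \sum_(i < n.+1) (m i : nat).

(* Partitions of m into pairwise distinct parts from A = subsets S of {0..m}
   with all elements in A and element sum m. *)
Definition is_dpartA (A : pred nat) (m : nat) (S : {set 'I_m.+1}) : bool :=
  [forall i in S, A i] && (\sum_(i in S) (i : nat) == m).

Definition qeA (A : pred nat) (m : nat) : nat :=
  #|[set S : {set 'I_m.+1} | is_dpartA A S && ~~ odd #|S|]|.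

Definition qoA (A : pred nat) (m : nat) : nat :=
  #|[set S : {set 'I_m.+1} | is_dpartA A S && odd #|S|]|.

From mathcomp Require Import all_boot all_order all_algebra.
From mathcomp Require Import ring zify.
Import GRing.Theory.
Local Open Scope ring_scope.
Set Implicit Arguments. Unset Strict Implicit. Unset Printing Implicit Defensive.

(* Generating functions: for a in A, prod_a (1 - x^a) generates q^e_A - q^o_A,
   while marking the multiplicity of one part size a in prod_b 1/(1 - x^b) gives
   sum_k N^p_A(k) x^k = sum_a x^a/(1 - x^a)^2 * prod_(b <> a) 1/(1 - x^b).
   The convolution of the theorem is thus the coefficient of x^n in
   sum_a x^a/(1 - x^a) = sum_a sum_(j >= 1) x^(a j), which counts the a in A
   dividing n.  The series are replaced by polynomial truncations and compared
   coefficientwise up to degree n. *)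

Section EqUpto.
Variable R : nzSemiRingType.
Implicit Types p q : {poly R}.

Definition eq_upto k p q := forall j, (j <= k)%N -> p`_j = q`_j.

Lemma eq_upto_trans k p q r : eq_upto k p q -> eq_upto k q r -> eq_upto k p r.
Proof. by move=> Epq Eqr j le_jk; rewrite Epq // Eqr. Qed.

Lemma eq_uptoD k p q p' q' :
  eq_upto k p p' -> eq_upto k q q' -> eq_upto k (p + q) (p' + q').
Proof. by move=> Ep Eq j le_jk; rewrite !coefD Ep // Eq. Qed.

Lemma eq_uptoM k p q p' q' :
  eq_upto k p p' -> eq_upto k q q' -> eq_upto k (p * q) (p' * q').
Proof.
move=> Ep Eq j le_jk; rewrite !coefM; apply: eq_bigr => -[i lt_ij] _ /=.
by rewrite Ep ?Eq //; lia.
Qed.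

Lemma eq_upto_sum k I r (P : pred I) (F G : I -> {poly R}) :
  (forall i, P i -> eq_upto k (F i) (G i)) ->
  eq_upto k (\sum_(i <- r | P i) F i) (\sum_(i <- r | P i) G i).
Proof. by move=> EFG; apply: (big_ind2 (eq_upto k)) => // *; apply: eq_uptoD. Qed.

Lemma eq_upto_prod k I r (P : pred I) (F G : I -> {poly R}) :
  (forall i, P i -> eq_upto k (F i) (G i)) ->
  eq_upto k (\prod_(i <- r | P i) F i) (\prod_(i <- r | P i) G i).
Proof. by move=> EFG; apply: (big_ind2 (eq_upto k)) => // *; apply: eq_uptoM. Qed.

Lemma eq_upto_XnM k d p : (k < d)%N -> eq_upto k ('X^d * p) 0.
Proof. by move=> lt_kd j le_jk; rewrite coefXnM coef0 ifT //; lia. Qed.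

Lemma eq_upto_stable k (f : nat -> {poly R}) :
  (forall r, (k <= r)%N -> eq_upto k (f r.+1) (f r)) ->
  forall r, (k <= r)%N -> eq_upto k (f r) (f k).
Proof.
move=> step; elim=> [|r IHr]; first by rewrite leqn0 => /eqP ->.
rewrite leq_eqVlt => /predU1P[<- //| lt_kr].
exact: eq_upto_trans (step r lt_kr) (IHr lt_kr).
Qed.

End EqUpto.

Section GeometricSums.
Variables (R : comNzRingType) (x : R).

Lemma geometric_sum r : (\sum_(j < r) x ^+ j) * (1 - x) = 1 - x ^+ r.
Proof. by rewrite -opprB mulrN mulrC -subrX1 opprB. Qed.

Lemma weighted_geometric_sum r :
  (\sum_(j < r.+1) j%:R * x ^+ j) * (1 - x) =
  \sum_(j < r) x ^+ j.+1 - r%:R * x ^+ r.+1.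
Proof.
elim: r => [|r IHr]; first by rewrite big_ord1 big_ord0 !mul0r subr0.
rewrite big_ord_recr mulrDl IHr [in RHS]big_ord_recr /= -!natr1 !exprS; ring.
Qed.

End GeometricSums.

Section GeneratingPolynomials.
Variable A : pred nat.

Definition part_mono (i j : nat) : {poly int} :=
  if (j == 0)%N || A i then 'X^(i * j) else 0.

Definition marked_mono (i0 i j : nat) : {poly int} :=
  (if i == i0 then j else 1)%:R * part_mono i j.

(* Each partition is counted once per part: the factor of part size [i0] is
   weighted by the multiplicity of [i0]. *)
Definition NpA_poly r : {poly int} :=
  \sum_(i0 < r.+1) \prod_(i < r.+1) \sum_(j < r.+1) marked_mono i0 i j.

Definition qeoA_poly r : {poly int} := \prod_(i < r.+1) (1 - part_mono i 1).

Lemma prod_part_mono (I : finType) (P : pred I) (f m : I -> nat) :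
  \prod_(i | P i) part_mono (f i) (m i) =
  if [forall (i | P i), (m i != 0)%N ==> A (f i)]
  then 'X^(\sum_(i | P i) f i * m i) else 0.
Proof.
case: ifP => [/forall_inP allA | /forall_inPn[i Pi]].
  by rewrite -prodrXr; apply: eq_bigr => i /allA; rewrite /part_mono -implyNb => ->.
rewrite negb_imply => /andP[/negbTE m_nz /negbTE notA].
by rewrite (bigD1 i) //= /part_mono m_nz notA mul0r.
Qed.

Lemma NpA0 : NpA A 0 = 0%N.
Proof. by rewrite /NpA big1 // => m _; rewrite big1 // => i _; rewrite (ord1 (m i)). Qed.

Lemma coef_NpA_poly k : (NpA A k)%:Z = (NpA_poly k)`_k.
Proof.
rewrite /NpA_poly; under eq_bigr do rewrite bigA_distr_bigA.
rewrite exchange_big /= coef_sum /NpA -natz natr_sum big_mkcond /=.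
apply: eq_bigr => m _.
have marked (i0 : 'I_k.+1) : \prod_(i < k.+1) marked_mono i0 i (m i) =
                 (m i0 : nat)%:R * \prod_(i < k.+1) part_mono i (m i).
  rewrite (bigD1 i0) //= [in RHS](bigD1 i0) //= /marked_mono eqxx mulrA.
  by congr (_ * _); apply: eq_bigr => i /negbTE ne_i; rewrite val_eqE ne_i mul1r.
rewrite (eq_bigr _ (fun i0 _ => marked i0)).
rewrite -mulr_suml -natr_sum mulr_natl coefMn prod_part_mono /is_partA.
case: [forall i, _]; last by rewrite coef0 mul0rn.
by rewrite coefXn eq_sym; case: eqP => _; rewrite ?mul0rn.
Qed.

Lemma signed_card (T : finType) (P : pred T) (c : T -> nat) :
  (#|[set x | P x && ~~ odd (c x)]|%:Z - #|[set x | P x && odd (c x)]|%:Z) =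
  \sum_(x | P x) (-1) ^+ c x.
Proof.
have card_sum (Q : pred T) : #|[set x | Q x]|%:Z = \sum_(x | Q x) 1.
  by rewrite sumr_const -natz cardsE.
rewrite (bigID (fun x => odd (c x))) /= addrC !card_sum -sumrN.
by congr (_ + _); apply: eq_bigr => x /andP[_ c_odd];
  rewrite -signr_odd ?c_odd ?(negbTE c_odd).
Qed.

Lemma coef_qeoA_poly m : (qeA A m)%:Z - (qoA A m)%:Z = (qeoA_poly m)`_m.
Proof.
rewrite /qeA /qoA signed_card /qeoA_poly.
rewrite (eq_bigr (fun i : 'I_m.+1 => - part_mono i 1 + 1)) => [|i _].
  2: by rewrite addrC.
rewrite bigA_distr coef_sum.
have coefMsign n (p : {poly int}) : ((-1) ^+ n * p)`_m = (-1) ^+ n * p`_m.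
  exact: raddfMsign (coefp m) n p.
under [RHS]eq_bigr do rewrite -big_mkcond /= prodrN coefMsign prod_part_mono.
rewrite [LHS]big_mkcond; apply: eq_big => // J _ /=.
under [in RHS]eq_bigr do rewrite muln1.
rewrite /is_dpartA; case: [forall _ in _, _]; last by rewrite coef0 mulr0.
by rewrite coefXn eq_sym; case: eqP; rewrite ?mulr1 ?mulr0.
Qed.

Hypothesis A0 : ~~ A 0.

Lemma part_mono_highdeg k i j : (k < i * j)%N -> eq_upto k (part_mono i j) 0.
Proof.
rewrite /part_mono; case: ifP => // _ lt_kij.
by rewrite -[X in eq_upto _ X _]mulr1; apply: eq_upto_XnM.
Qed.

Lemma part_mono_highmult k i j : (k < j)%N -> eq_upto k (part_mono i j) 0.
Proof.
move=> lt_kj; case Ai: (A i).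
  have i_gt0 : (0 < i)%N by case: i Ai => //; rewrite (negbTE A0).
  by apply: part_mono_highdeg; nia.
by rewrite /part_mono Ai orbF; case: eqP => // j0; lia.
Qed.

Lemma marked_mono_eq_upto0 k i0 i j :
  eq_upto k (part_mono i j) 0 -> eq_upto k (marked_mono i0 i j) 0.
Proof.
by move=> E0; rewrite /marked_mono; set c := _%:R; rewrite -(mulr0 c); apply: eq_uptoM.
Qed.

Lemma sum_marked_mono_highpart k r i0 i : (k < i)%N ->
  eq_upto k (\sum_(j < r.+1) marked_mono i0 i j) (i != i0)%:R.
Proof.
move=> lt_ki; rewrite big_ord_recl -[X in eq_upto _ _ X]addr0.
apply: eq_uptoD.
  by rewrite /marked_mono /part_mono muln0 expr0 mulr1; case: eqP.
apply: (@eq_upto_trans _ _ _ (\sum_(j < r) 0)); last by rewrite big1.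
apply: eq_upto_sum => j _; apply/marked_mono_eq_upto0/part_mono_highdeg.
by rewrite /= /bump leq0n add1n; nia.
Qed.

Lemma NpA_poly_succ k r : (k <= r)%N -> eq_upto k (NpA_poly r.+1) (NpA_poly r).
Proof.
move=> le_kr; rewrite /NpA_poly big_ord_recr /= -[X in eq_upto _ _ X]addr0.
apply: eq_uptoD.
  apply: eq_upto_sum => i0 _; rewrite big_ord_recr /= -[X in eq_upto _ _ X]mulr1.
  apply: eq_uptoM.
    apply: eq_upto_prod => i _; rewrite big_ord_recr /= -[X in eq_upto _ _ X]addr0.
    by apply: eq_uptoD => //; apply/marked_mono_eq_upto0/part_mono_highmult; lia.
  apply: eq_upto_trans (@sum_marked_mono_highpart k r.+1 i0 r.+1 _) _; first lia.
  by rewrite neq_ltn ltn_ord orbT.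
rewrite big_ord_recr /=; set P := \prod_(i < r.+1) _.
rewrite -[X in eq_upto _ _ X](mulr0 P).
apply: eq_uptoM => //.
apply: eq_upto_trans (@sum_marked_mono_highpart k r.+1 r.+1 r.+1 _) _; first lia.
by rewrite eqxx.
Qed.

Lemma NpA_poly_stable k r : (k <= r)%N -> eq_upto k (NpA_poly r) (NpA_poly k).
Proof. by apply: (eq_upto_stable (f := NpA_poly)) => r' /NpA_poly_succ. Qed.

Lemma qeoA_poly_succ k r : (k <= r)%N -> eq_upto k (qeoA_poly r.+1) (qeoA_poly r).
Proof.
move=> le_kr; rewrite /qeoA_poly big_ord_recr /= -[X in eq_upto _ _ X]mulr1.
apply: eq_uptoM => // j le_jk.
by rewrite coefB (@part_mono_highdeg k) ?muln1 // coef0 subr0.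
Qed.

Lemma qeoA_poly_stable k r : (k <= r)%N -> eq_upto k (qeoA_poly r) (qeoA_poly k).
Proof. by apply: (eq_upto_stable (f := qeoA_poly)) => r' /qeoA_poly_succ. Qed.

Definition multiples_poly n i : {poly int} :=
  if A i then \sum_(j < n) 'X^(i * j.+1) else 0.

Lemma factor_eq_upto n i0 i :
  eq_upto n ((\sum_(j < n.+1) marked_mono i0 i j) * (1 - part_mono i 1))
            (if i == i0 then multiples_poly n i else 1).
Proof.
rewrite /marked_mono /multiples_poly; case Ai: (A i); last first.
  have -> : part_mono i 1 = 0 by rewrite /part_mono Ai.
  rewrite subr0 mulr1 big_ord_recl big1 => [|j _].
    by rewrite /part_mono muln0 expr0 mulr1 addr0; case: (i == i0).
  by rewrite /part_mono Ai mulr0.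
have i_gt0 : (0 < i)%N by case: i Ai => //; rewrite (negbTE A0).
have -> : part_mono i 1 = 'X^i by rewrite /part_mono Ai orbT muln1.
rewrite (eq_bigr (fun j : 'I_n.+1 => (if i == i0 then j : nat else 1%N)%:R * 'X^i ^+ j)).
  2: by move=> j _; rewrite /part_mono Ai orbT exprM.
case: (i == i0).
  rewrite weighted_geometric_sum -[X in eq_upto _ _ X]addr0.
  apply: eq_uptoD; first by move=> j _; under [in RHS]eq_bigr do rewrite exprM.
  by rewrite mulrC -mulrN -exprM; apply: eq_upto_XnM; nia.
rewrite (eq_bigr (fun j : 'I_n.+1 => 'X^i ^+ j)) => [|j _]; last by rewrite mul1r.
rewrite geometric_sum -exprM -mulrN1 -[X in eq_upto _ _ X]addr0.
by apply: eq_uptoD => //; apply: eq_upto_XnM; nia.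
Qed.

Lemma NpA_qeoA_poly_eq_upto n :
  eq_upto n (NpA_poly n * qeoA_poly n) (\sum_(i < n.+1) multiples_poly n i).
Proof.
rewrite /NpA_poly /qeoA_poly mulr_suml; apply: eq_upto_sum => i0 _.
rewrite -big_split /=.
apply: (@eq_upto_trans _ _ _
  (\prod_(i < n.+1) if i == i0 :> nat then multiples_poly n i else 1)).
  by apply: eq_upto_prod => i _; apply: factor_eq_upto.
by rewrite (bigD1 i0) //= eqxx big1 ?mulr1 // => i /negbTE ne_i; rewrite val_eqE ne_i.
Qed.

Lemma sum_eq_mulnS i n : (0 < i)%N -> (0 < n)%N ->
  (\sum_(j < n) (n == i * j.+1) = (i %| n))%N.
Proof.
move=> i_gt0 n_gt0; have [/dvdnP[[|q] n_eq]|ndvd] := boolP (i %| n)%N; first lia.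
  have lt_qn : (q < n)%N by nia.
  rewrite (bigD1 (Ordinal lt_qn)) //= big1 => [|j ne_jq].
    by rewrite n_eq mulnC eqxx.
  case: eqP => // E; case/eqP: ne_jq; apply: val_inj => /=; nia.
rewrite big1 // => j _; case: eqP => // E.
by case/negP: ndvd; apply/dvdnP; exists j.+1; rewrite mulnC.
Qed.

Lemma coef_multiples_poly n i : (0 < n)%N ->
  (multiples_poly n i)`_n = (A i && (i %| n)%N)%:R.
Proof.
move=> n_gt0; rewrite /multiples_poly; case Ai: (A i); last by rewrite coef0.
have i_gt0 : (0 < i)%N by case: i Ai => //; rewrite (negbTE A0).
rewrite coef_sum -sum_eq_mulnS // natr_sum.
by apply: eq_bigr => j _; rewrite coefXn.
Qed.

Theorem sum_NpA_qeoA n : (0 < n)%N ->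
  \sum_(1 <= k < n.+1) (NpA A k)%:Z * ((qeA A (n - k))%:Z - (qoA A (n - k))%:Z)
  = (\sum_(i < n.+1) (A i && (i %| n)) : nat)%:Z.
Proof.
move=> n_gt0.
have N_coef k : (k <= n)%N -> (NpA A k)%:Z = (NpA_poly n)`_k.
  by move=> le_kn; rewrite coef_NpA_poly (NpA_poly_stable le_kn).
have Q_coef k : (qeA A (n - k))%:Z - (qoA A (n - k))%:Z = (qeoA_poly n)`_(n - k).
  by rewrite coef_qeoA_poly (qeoA_poly_stable (leq_subr k n)).
transitivity ((NpA_poly n * qeoA_poly n)`_n); last first.
  rewrite NpA_qeoA_poly_eq_upto // coef_sum -natz natr_sum.
  by apply: eq_bigr => i _; rewrite coef_multiples_poly.
rewrite coefM -(big_mkord xpredT (fun k => (NpA_poly n)`_k * (qeoA_poly n)`_(n - k))).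
rewrite big_ltn // -(N_coef 0%N) // NpA0 mul0r add0r.
by apply: eq_big_nat => k /andP[_ lt_kn]; rewrite N_coef ?Q_coef.
Qed.

End GeneratingPolynomials.

Lemma sum_prime_dvdn n : (0 < n)%N ->
  (\sum_(i < n.+1) (prime i && (i %| n)) = size (primes n))%N.
Proof.
move=> n_gt0; rewrite -(filter_pi_of (ltnSn n)) size_filter -sum1_count.
rewrite big_mkord [RHS]big_mkcond; apply: eq_bigr => i _.
by rewrite /= mem_primes n_gt0; case: (_ && _).
Qed.

Theorem corollary6 (n : nat) (hn : (0 < n)%N) :
  \sum_(1 <= k < n.+1)
     (NpA prime k)%:Z * ((qeA prime (n - k))%:Z - (qoA prime (n - k))%:Z)
  = (size (primes n))%:Z.
Proof. by rewrite (@sum_NpA_qeoA prime) // sum_prime_dvdn. Qed.
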